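(* Let $\mathcal{J}=\{0,1,\dots,f-1\}$ and let $B,B'\in M_{2^f}(\mathbb{F})$ be matrices with all entries nonzero, rows and columns indexed by the subsets of $\mathcal{J}$, each satisfying $B_{J_1,J_3}/B_{J_1,J_4}=B_{J_2,J_3}/B_{J_2,J_4}$ (resp. the same for $B'$) for all $J_1,J_2,J_3,J_4\subseteq\mathcal{J}$. If \[\frac{B_{J,\emptyset}}{B_{J^c,\emptyset}B_{J,J^c}}=\frac{B'_{J,\emptyset}}{B'_{J^c,\emptyset}B'_{J,J^c}}\quad\text{for all }J\subseteq\mathcal{J},\] then there is an invertible diagonal matrix $Q$ with $B'=Q^{-1}BQ$. That is, up to conjugation by diagonal matrices, $B$ is uniquely determined by the quantities $B_{J,\emptyset}/(B_{J^c,\emptyset}B_{J,J^c})$, $J\subseteq\mathcal{J}$.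
   Context: $\mathbb{F}$ is a finite field; $J^c$ denotes the complement of $J$ in $\mathcal{J}$. *)

From mathcomp Require Import all_boot all_order all_algebra all_field.
Set Implicit Arguments. Unset Strict Implicit. Unset Printing Implicit Defensive.
Import GRing.Theory.
Local Open Scope ring_scope.

(* Square matrices whose rows and columns are indexed by the subsets of
   J = {0,...,f-1}; the size is #|{set 'I_f}| = 2^f. *)
Definition subset_mx (F : fieldType) (f : nat) := 'M[F]_(#|{set 'I_f}|).

Definition sent (F : fieldType) (f : nat) (B : subset_mx F f)
  (J K : {set 'I_f}) : F := B (enum_rank J) (enum_rank K).

From mathcomp Require Import all_boot all_order all_algebra all_field.
From mathcomp Require Import ring.
Set Implicit Arguments.
Unset Strict Implicit.
Unset Printing Implicit Defensive.
Import GRing.Theory.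
Local Open Scope ring_scope.

(* The ratio condition says that B has rank one: every entry factors through
   a fixed column k as B_{i,j} = B_{i,k} B_{j,j} / B_{j,k}.  Plugging this into
   the invariant attached to J shows that it equals 1 / B_{J^c,J^c}, so the
   hypothesis only says that B and B' have the same diagonal.  Two such rank one
   matrices with the same diagonal are conjugate by the diagonal matrix with
   entries d_i = B_{i,k} / B'_{i,k}. *)

Definition proportional_rows {F : fieldType} {n : nat} (M : 'M[F]_n) :=
  forall i1 i2 j1 j2, M i1 j1 / M i1 j2 = M i2 j1 / M i2 j2.

Section ProportionalRows.

Variables (F : fieldType) (n : nat) (M : 'M[F]_n).
Hypotheses (M_neq0 : forall i j, M i j != 0) (M_prop : proportional_rows M).

Lemma proportional_entry i j k : M i j = M j j / M j k * M i k.
Proof. by rewrite -(M_prop i j j k) divfK. Qed.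

Lemma proportional_diagV i j k : M i k / (M j k * M i j) = (M j j)^-1.
Proof. by rewrite (proportional_entry i j k); field; rewrite !M_neq0. Qed.

End ProportionalRows.

Lemma unitmx_diag (F : fieldType) (n : nat) (d : 'rV[F]_n) :
  (forall i, d 0 i != 0) -> diag_mx d \in unitmx.
Proof.
by move=> d_neq0; rewrite unitmxE det_diag unitfE; apply/prodf_neq0 => i _.
Qed.

Lemma proportional_diag_conj (F : fieldType) (n : nat) (M M' : 'M[F]_n) :
  (forall i j, M i j != 0) -> (forall i j, M' i j != 0) ->
  proportional_rows M -> proportional_rows M' ->
  (forall i, M i i = M' i i) ->
  exists d : 'rV[F]_n,
    (forall i, d 0 i != 0) /\ M' = invmx (diag_mx d) *m M *m diag_mx d.
Proof.
case: n M M' => [|n] M M' M_neq0 M'_neq0 M_prop M'_prop eq_diag.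
  by exists 0; split=> [[] //|]; apply/matrixP => -[].
pose d := \row_i (M i 0 / M' i 0).
have d_neq0 i : d 0 i != 0 by rewrite mxE mulf_neq0 ?invr_eq0.
exists d; split=> //.
have conj_d : diag_mx d *m M' = M *m diag_mx d.
  rewrite mul_diag_mx mul_mx_diag; apply/matrixP => i j; rewrite !mxE.
  rewrite (proportional_entry M_neq0 M_prop i j 0).
  rewrite (proportional_entry M'_neq0 M'_prop i j 0).
  by rewrite eq_diag; field; rewrite !M_neq0 !M'_neq0.
by rewrite -mulmxA -conj_d mulKmx ?unitmx_diag.
Qed.

Lemma proportional_rows_sent (F : fieldType) (f : nat) (M : subset_mx F f) :
  (forall J1 J2 J3 J4 : {set 'I_f},
      sent M J1 J3 / sent M J1 J4 = sent M J2 J3 / sent M J2 J4) ->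
  proportional_rows M.
Proof.
move=> M_prop i1 i2 j1 j2.
by have := M_prop (enum_val i1) (enum_val i2) (enum_val j1) (enum_val j2);
  rewrite /sent !enum_valK.
Qed.

Lemma sent_invariant_diagV (F : fieldType) (f : nat) (M : subset_mx F f)
    (J : {set 'I_f}) :
  (forall i j, M i j != 0) -> proportional_rows M ->
  sent M J set0 / (sent M (~: J) set0 * sent M J (~: J))
  = (sent M (~: J) (~: J))^-1.
Proof. by move=> M_neq0 M_prop; rewrite /sent proportional_diagV. Qed.

Theorem lemma5p4 (F : finFieldType) (f : nat) (B B' : subset_mx F f) :
  (forall i j, B i j != 0) ->
  (forall i j, B' i j != 0) ->
  (forall J1 J2 J3 J4 : {set 'I_f},
      sent B J1 J3 / sent B J1 J4 = sent B J2 J3 / sent B J2 J4) ->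
  (forall J1 J2 J3 J4 : {set 'I_f},
      sent B' J1 J3 / sent B' J1 J4 = sent B' J2 J3 / sent B' J2 J4) ->
  (forall J : {set 'I_f},
      sent B J set0 / (sent B (~: J) set0 * sent B J (~: J))
      = sent B' J set0 / (sent B' (~: J) set0 * sent B' J (~: J))) ->
  exists d : 'rV[F]_(#|{set 'I_f}|),
    (forall i, d 0 i != 0) /\
    B' = invmx (diag_mx d) *m B *m diag_mx d.
Proof.
move=> B_neq0 B'_neq0 /proportional_rows_sent B_prop
  /proportional_rows_sent B'_prop eq_invariant.
apply: proportional_diag_conj => // k.
have := eq_invariant (~: enum_val k).
rewrite !sent_invariant_diagV // setCK /sent enum_valK.
exact: invr_inj.
Qed.
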